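(* Let $A,B\in\mathcal{K}_n$. Then $A$ is an endpoint on the line through $A$ and $B$ if and only if for every $\epsilon\in(0,1)$ the convex body $\epsilon B$ is not a summand of $A$.
   Context: A convex body is a closed, bounded, non-empty convex subset of $\mathbb{R}^n$; $\mathcal{K}_n$ is the set of convex bodies in $\mathbb{R}^n$ with Minkowski addition and nonnegative scaling. The support function of $A$ is $h_A(x)=\sup\{a\cdot x: a\in A\}$ and $\mathcal{H}=\{h_A:A\in\mathcal{K}_n\}$. The line through $A$ and $B$ is the set of $X\in\mathcal{K}_n$ with $h_X=(1-t)h_A+th_B$ for some $t\in\mathbb{R}$; $A$ is an endpoint on this line if there is no $t<0$ with $(1-t)h_A+th_B\in\mathcal{H}$ (i.e. the line contains no convex body on the opposite side of $A$ from $B$). For $K,L\in\mathcal{K}_n$, $L$ is a summand of $K$ if there is $M\in\mathcal{K}_n$ with $L+M=K$. *)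

From HB Require Import structures.
From mathcomp Require Import all_boot all_order all_algebra.
From mathcomp Require Import all_classical all_reals all_analysis.
Set Implicit Arguments. Unset Strict Implicit. Unset Printing Implicit Defensive.
Import Order.TTheory GRing.Theory Num.Theory.
Import numFieldNormedType.Exports.
Local Open Scope classical_set_scope.
Local Open Scope ring_scope.

Section ConvexBodies.
Variables (R : realType) (n : nat).
Notation V := 'rV[R]_n.

Definition dotv (a x : V) : R := \sum_(i < n) a 0 i * x 0 i.

Definition convex_set_in (A : set V) : Prop :=
  forall a b t, A a -> A b -> 0 <= t <= 1 -> A ((1 - t) *: a + t *: b).

Definition convex_body (A : set V) : Prop :=
  [/\ closed A, bounded_set A, A !=set0 & convex_set_in A].

Definition supp_fun (A : set V) (x : V) : R := sup [set dotv a x | a in A].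

Definition mink_sum (A B : set V) : set V := [set a + b | a in A & b in B].
Definition scale_body (e : R) (A : set V) : set V := [set e *: a | a in A].

Definition is_supp_fun (f : V -> R) : Prop :=
  exists X, convex_body X /\ (forall x, f x = supp_fun X x).

Definition endpoint (A B : set V) : Prop :=
  ~ (exists t : R, t < 0 /\
       is_supp_fun (fun x => (1 - t) * supp_fun A x + t * supp_fun B x)).

Definition summand (L K : set V) : Prop :=
  exists M, convex_body M /\ mink_sum L M = K.

End ConvexBodies.

(** A convex body is determined by its support function: a point p outside a
    convex body K is strictly separated from K in the direction [p - q], where
    q is the point of K nearest to p, so [h_K <= h_L] forces [K `<=` L].  As
    support functions are additive and positively homogeneous, [eB] is a
    summand of [A] exactly when [h_A - e h_B] is a support function.  Finally
    [(1 - t) h_A + t h_B = (1 - t) (h_A - e h_B)] for [e = -t / (1 - t)], and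
    [t |-> -t / (1 - t)] maps [t < 0] onto [0 < e < 1]. *)
From HB Require Import structures.
From mathcomp Require Import all_boot all_order all_algebra.
From mathcomp Require Import all_classical all_reals all_analysis.
From mathcomp Require Import ring lra.
Set Implicit Arguments. Unset Strict Implicit. Unset Printing Implicit Defensive.
Import Order.TTheory GRing.Theory Num.Theory.
Import numFieldNormedType.Exports.
Local Open Scope classical_set_scope.
Local Open Scope ring_scope.

Section DotProduct.
Variables (R : realType) (n : nat).
Notation V := 'rV[R]_n.
Implicit Types (a b x : V).

Lemma dotvDl a b x : dotv (a + b) x = dotv a x + dotv b x.
Proof. by rewrite /dotv -big_split; apply: eq_bigr => i _; rewrite mxE mulrDl. Qed.

Lemma dotvZl (c : R) a x : dotv (c *: a) x = c * dotv a x.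
Proof. by rewrite /dotv mulr_sumr; apply: eq_bigr => i _; rewrite mxE mulrA. Qed.

Lemma dotvBl a b x : dotv (a - b) x = dotv a x - dotv b x.
Proof. by rewrite dotvDl -scaleN1r dotvZl mulN1r. Qed.

Lemma dotvC a x : dotv a x = dotv x a.
Proof. by apply: eq_bigr => i _; rewrite mulrC. Qed.

Lemma dotvZr (c : R) a x : dotv x (c *: a) = c * dotv x a.
Proof. by rewrite !(dotvC x) dotvZl. Qed.

Lemma dotvBr a b x : dotv x (a - b) = dotv x a - dotv x b.
Proof. by rewrite !(dotvC x) dotvBl. Qed.

Lemma dotvv_ge0 a : 0 <= dotv a a.
Proof. by apply: sumr_ge0 => i _; rewrite -expr2 sqr_ge0. Qed.

Lemma dotvv_gt0 a : a != 0 -> 0 < dotv a a.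
Proof.
move=> a0; rewrite lt_def dotvv_ge0 andbT; apply: contra a0 => /eqP.
have sq_ge0 i : 0 <= a 0 i * a 0 i by rewrite -expr2 sqr_ge0.
move=> /psumr_eq0P a2_0; apply/eqP/rowP => i; rewrite mxE.
by apply/eqP; rewrite -[_ == 0]orbb -mulf_eq0 a2_0.
Qed.

Lemma dotv_expand (w u : V) (t : R) :
  dotv (w - t *: u) (w - t *: u) = dotv w w - 2 * t * dotv u w + t ^+ 2 * dotv u u.
Proof. by rewrite !dotvBl !dotvBr !dotvZl !dotvZr (dotvC w u); ring. Qed.

Lemma continuous_dotv (f g : V -> V) :
  continuous f -> continuous g -> continuous (fun a => dotv (f a) (g a)).
Proof.
move=> fc gc a; rewrite /dotv.
apply: (@continuous_big _ _ +%R 0 xpredT add_continuous _ (index_enum _)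
  (fun i a => f a 0 i * g a 0 i)) => i _ b.
apply: continuousM.
  exact: continuous_comp (fc b) (@coord_continuous _ 1 n 0 i (f b)).
exact: continuous_comp (gc b) (@coord_continuous _ 1 n 0 i (g b)).
Qed.

End DotProduct.

Section SupportFunction.
Variables (R : realType) (n : nat).
Notation V := 'rV[R]_n.
Implicit Types (K L : set V) (p x : V).

Lemma supp_funE K x c : K c -> (forall s, K s -> dotv s x <= dotv c x) ->
  supp_fun K x = dotv c x.
Proof.
move=> Kc maxc; apply/eqP; rewrite eq_le; apply/andP; split.
  by apply: ge_sup => [|_ [s Ks <-]]; [exists (dotv c x), c | exact: maxc].
apply: sup_upper_bound; last by exists c.
split; first by exists (dotv c x), c.
by exists (dotv c x) => _ [s Ks <-]; exact: maxc.
Qed.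

Lemma convex_body_compact K : convex_body K -> compact K.
Proof. by case=> cK bK _ _; exact: bounded_closed_compact. Qed.

Lemma supp_fun_attained K x : convex_body K ->
  exists2 c, K c & supp_fun K x = dotv c x /\ forall s, K s -> dotv s x <= dotv c x.
Proof.
move=> Kb; have [_ _ K0 _] := Kb.
have [c /set_mem Kc maxc] := EVT_max_rV K0 (convex_body_compact Kb)
  (continuous_subspaceT (continuous_dotv (fun _ => cvg_id) (@cst_continuous _ _ x))).
have {}maxc s : K s -> dotv s x <= dotv c x by move=> /mem_set; exact: maxc.
by exists c => //; split => //; exact: supp_funE.
Qed.

Lemma supp_fun_ge K x s : convex_body K -> K s -> dotv s x <= supp_fun K x.
Proof. by move=> /(supp_fun_attained x) [c _ [-> maxc]] /maxc. Qed.

(* With [c = <s - q, p - q>] and [d = |s - q|^2], minimality of [q] along the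
   segment [q, s] gives [2 t c <= t^2 d] for [t] in (0, 1]; if [c > 0], then
   [t = c / (c + d)] yields [2 c <= t d < c]. *)
Lemma nearest_point_normal K p q : convex_set_in K -> K q ->
    (forall s, K s -> dotv (p - q) (p - q) <= dotv (p - s) (p - s)) ->
  forall s, K s -> dotv s (p - q) <= dotv q (p - q).
Proof.
move=> cK Kq nearq s Ks; set w := p - q; set u := s - q.
have first_order t : 0 < t <= 1 -> 2 * t * dotv u w <= t ^+ 2 * dotv u u.
  move=> /andP[t0 t1]; have := nearq _ (cK _ _ t Kq Ks _); rewrite ltW ?t0 //.
  have -> : p - ((1 - t) *: q + t *: s) = w - t *: u.
    by rewrite /w /u scalerBl scale1r scalerBr !opprD !opprK !addrA [RHS]addrAC.
  by rewrite -/w dotv_expand; lra.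
rewrite -subr_le0 -dotvBl -/u leNgt; apply/negP => c0.
have d0 := dotvv_ge0 u.
set c := dotv u w in first_order c0; set d := dotv u u in first_order d0.
have cd0 : 0 < c + d by lra.
pose t := c / (c + d); have t0 : 0 < t by rewrite divr_gt0.
have t1 : t <= 1 by rewrite ler_pdivrMr // mul1r lerDl.
have td : t ^+ 2 * d = t * c - t ^+ 2 * c.
  by rewrite /t expr2 -!mulrA -mulrBr -mulrBr; congr (_ * _); field; rewrite gt_eqF.
have := first_order t; rewrite t0 t1 td => /(_ isT).
have := mulr_gt0 t0 c0; have := mulr_gt0 (exprn_gt0 2 t0) c0; lra.
Qed.

Lemma separate_point K p : convex_body K -> ~ K p ->
  exists w, supp_fun K w < dotv p w.
Proof.
move=> Kb Kp; have [_ _ K0 cK] := Kb.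
have diff_cont : continuous (fun s : V => p - s).
  by move=> s; exact: continuousB (@cst_continuous _ _ p s) cvg_id.
have [q /set_mem Kq nearq] := EVT_min_rV K0 (convex_body_compact Kb)
  (continuous_subspaceT (continuous_dotv diff_cont diff_cont)).
have {}nearq s : K s -> dotv (p - q) (p - q) <= dotv (p - s) (p - s).
  by move=> /mem_set; exact: nearq.
have pq0 : p - q != 0 by rewrite subr_eq0; apply: contraPneq Kp => ->.
exists (p - q); have [c Kc [-> _]] := supp_fun_attained (p - q) Kb.
apply: le_lt_trans (nearest_point_normal cK Kq nearq Kc) _.
by rewrite -subr_gt0 -dotvBl; exact: dotvv_gt0.
Qed.

Lemma supp_fun_le_subset K L : convex_body K -> convex_body L ->
  (forall x, supp_fun K x <= supp_fun L x) -> K `<=` L.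
Proof.
move=> Kb Lb KL p Kp; apply: contrapT => Lp.
have [w] := separate_point Lb Lp; apply/negP; rewrite -leNgt.
exact: le_trans (supp_fun_ge w Kb Kp) (KL w).
Qed.

Lemma supp_fun_inj K L : convex_body K -> convex_body L ->
  (forall x, supp_fun K x = supp_fun L x) -> K = L.
Proof.
by move=> Kb Lb KL; apply/seteqP; split; apply: supp_fun_le_subset => // x; rewrite KL.
Qed.

Lemma compact_convex_body K : compact K -> K !=set0 -> convex_set_in K ->
  convex_body K.
Proof.
move=> cpt K0 cK; split => //; last exact: compact_bounded.
exact: compact_closed (@norm_hausdorff _ _) cpt.
Qed.

Lemma convex_body_scale (c : R) K : convex_body K -> convex_body (scale_body c K).
Proof.
move=> Kb; have [_ _ [k Kk] cK] := Kb; apply: compact_convex_body.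
- apply: continuous_compact (convex_body_compact Kb).
  by apply: continuous_subspaceT => z; exact: continuousZ (@cst_continuous _ _ c z) cvg_id.
- by exists (c *: k), k.
- move=> _ _ t [a Ka <-] [b Kb' <-] t01; exists ((1 - t) *: a + t *: b).
    exact: cK.
  by rewrite scalerDr !scalerA mulrC (mulrC c t) -!scalerA.
Qed.

Lemma mink_sumE K L : mink_sum K L = (fun z : V * V => z.1 + z.2) @` (K `*` L).
Proof.
apply/seteqP; split => [_ [a Ka [b Lb <-]]|_ [[a b] [/= Ka Lb] <-]].
  by exists (a, b).
by exists a => //; exists b.
Qed.

Lemma convex_body_mink_sum K L :
  convex_body K -> convex_body L -> convex_body (mink_sum K L).
Proof.
move=> Kb Lb; have [_ _ [k Kk] cK] := Kb; have [_ _ [l Ll] cL] := Lb.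
apply: compact_convex_body.
- rewrite mink_sumE; apply: continuous_compact.
    by apply: continuous_subspaceT => z; exact: continuousD cvg_fst cvg_snd.
  exact: compact_setX (convex_body_compact Kb) (convex_body_compact Lb).
- by exists (k + l), k => //; exists l.
- move=> _ _ t [a1 Ka1 [b1 Lb1 <-]] [a2 Ka2 [b2 Lb2 <-]] t01.
  exists ((1 - t) *: a1 + t *: a2); first exact: cK.
  exists ((1 - t) *: b1 + t *: b2); first exact: cL.
  by rewrite !scalerDr addrACA.
Qed.

Lemma supp_fun_scale (c : R) K x : 0 <= c -> convex_body K ->
  supp_fun (scale_body c K) x = c * supp_fun K x.
Proof.
move=> c0 Kb; have [k Kk [-> maxk]] := supp_fun_attained x Kb.
rewrite (@supp_funE _ _ (c *: k)) ?dotvZl //; first by exists k.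
by move=> _ [s Ks <-]; rewrite !dotvZl ler_wpM2l // maxk.
Qed.

Lemma supp_fun_mink_sum K L x : convex_body K -> convex_body L ->
  supp_fun (mink_sum K L) x = supp_fun K x + supp_fun L x.
Proof.
move=> Kb Lb.
have [k Kk [-> maxk]] := supp_fun_attained x Kb.
have [l Ll [-> maxl]] := supp_fun_attained x Lb.
rewrite (@supp_funE _ _ (k + l)) ?dotvDl //; first by exists k => //; exists l.
by move=> _ [a Ka [b Lb' <-]]; rewrite dotvDl lerD ?maxk ?maxl.
Qed.

Lemma is_supp_fun_ext (f g : V -> R) : (forall x, f x = g x) ->
  is_supp_fun f -> is_supp_fun g.
Proof. by move=> fg [X [Xb fX]]; exists X; split => // x; rewrite -fg. Qed.

Lemma is_supp_funZ (c : R) (f : V -> R) : 0 <= c -> is_supp_fun f ->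
  is_supp_fun (fun x => c * f x).
Proof.
move=> c0 [X [Xb fX]]; exists (scale_body c X); split.
  exact: convex_body_scale.
by move=> x; rewrite supp_fun_scale // fX.
Qed.

Lemma summand_scaleP (e : R) K L : 0 <= e -> convex_body K -> convex_body L ->
  summand (scale_body e L) K <-> is_supp_fun (fun x => supp_fun K x - e * supp_fun L x).
Proof.
move=> e0 Kb Lb; have eLb := convex_body_scale e Lb; split.
- move=> [M [Mb <-]]; exists M; split => // x.
  by rewrite supp_fun_mink_sum // supp_fun_scale // addrAC subrr add0r.
- move=> [M [Mb hM]]; exists M; split => //.
  apply: supp_fun_inj => //; first exact: convex_body_mink_sum.
  by move=> x; rewrite supp_fun_mink_sum // supp_fun_scale // -hM /= addrC subrK.
Qed.

End SupportFunction.

Theorem proposition3 (R : realType) (n : nat) (A B : set 'rV[R]_n) :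
  convex_body A -> convex_body B ->
  (endpoint A B <->
   (forall e : R, 0 < e < 1 -> ~ summand (scale_body e B) A)).
Proof.
move=> Ab Bb; split.
- move=> ep e /andP[e0 e1] /(summand_scaleP (ltW e0) Ab Bb) hAB; apply: ep.
  have e1_gt0 : 0 < 1 - e by rewrite subr_gt0.
  have inv_ge0 : 0 <= (1 - e)^-1 by rewrite invr_ge0 ltW.
  exists (- (e / (1 - e))); split; first by rewrite oppr_lt0 divr_gt0.
  apply: is_supp_fun_ext (is_supp_funZ inv_ge0 hAB) => x /=.
  by field; rewrite gt_eqF.
- move=> noSummand [t [t0 hAB]].
  have t1_gt0 : 0 < 1 - t by lra.
  have inv_ge0 : 0 <= (1 - t)^-1 by rewrite invr_ge0 ltW.
  apply: (noSummand (- t / (1 - t))).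
    by rewrite divr_gt0 ?oppr_gt0 //= ltr_pdivrMr // mul1r; lra.
  apply/(summand_scaleP _ Ab Bb); first by rewrite divr_ge0 ?oppr_ge0 ?ltW.
  apply: is_supp_fun_ext (is_supp_funZ inv_ge0 hAB) => x /=.
  by field; rewrite gt_eqF.
Qed.
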